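(* A conditional frame $(X,\leq,\mathcal{R})$ validates $\mathsf{iCC}=\mathsf{ICK}\oplus(p\mathrel{\Box\!\!\!\rightarrow} p)\oplus(((p\mathrel{\Box\!\!\!\rightarrow} q)\wedge((p\wedge q)\mathrel{\Box\!\!\!\rightarrow} r))\to(p\mathrel{\Box\!\!\!\rightarrow} r))\oplus(((p\mathrel{\Box\!\!\!\rightarrow} q)\wedge(p\mathrel{\Box\!\!\!\rightarrow} r))\to((p\wedge q)\mathrel{\Box\!\!\!\rightarrow} r))$ if and only if for all $x\in X$ and upsets $a,b$: (i) $R_a[x]\subseteq a$; and (ii) $R_a[x]\subseteq b\subseteq a$ implies ${\uparrow}R_a[x]={\uparrow}R_b[x]$.
   Context: Formulas: $\phi ::= p\mid\bot\mid\phi\wedge\phi\mid\phi\vee\phi\mid\phi\to\phi\mid\phi\mathrel{\Box\!\!\!\rightarrow}\phi$. $\mathsf{ICK}\oplus\Gamma$ is the smallest set containing intuitionistic propositional logic, $\Gamma$, $(p\mathrel{\Box\!\!\!\rightarrow}(q\wedge r))\leftrightarrow((p\mathrel{\Box\!\!\!\rightarrow} q)\wedge(p\mathrel{\Box\!\!\!\rightarrow} r))$ and $(p\mathrel{\Box\!\!\!\rightarrow}\top)\leftrightarrow\top$, closed under uniform substitution, modus ponens and congruence rules for both arguments of $\mathrel{\Box\!\!\!\rightarrow}$. A conditional frame is $(X,\leq,\mathcal{R})$, $(X,\leq)$ a nonempty preorder, $\mathcal{R}=\{R_a\mid a\text{ an upset}\}$ with $(\leq\circ R_a)\subseteq(R_a\circ\leq)$;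 valuations assign upsets to letters and $x\models\phi\mathrel{\Box\!\!\!\rightarrow}\psi$ iff every $y$ with $xR_{V(\phi)}y$ satisfies $\psi$. *)

From Stdlib Require Import Arith.

Inductive form : Type :=
| Var : nat -> form
| Bot : form
| And : form -> form -> form
| Or : form -> form -> form
| Imp : form -> form -> form
| Cond : form -> form -> form.

Definition Top : form := Imp Bot Bot.
Definition Iff (a b : form) : form := And (Imp a b) (Imp b a).

Definition p : form := Var 0.
Definition q : form := Var 1.
Definition r : form := Var 2.

Fixpoint subst (s : nat -> form) (f : form) : form :=
  match f with
  | Var n => s n
  | Bot => Bot
  | And a b => And (subst s a) (subst s b)
  | Or a b => Or (subst s a) (subst s b)
  | Imp a b => Imp (subst s a) (subst s b)
  | Cond a b => Cond (subst s a) (subst s b)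
  end.

Inductive iCC : form -> Prop :=
| ipc1 : iCC (Imp p (Imp q p))
| ipc2 : iCC (Imp (Imp p (Imp q r)) (Imp (Imp p q) (Imp p r)))
| ipc3 : iCC (Imp (And p q) p)
| ipc4 : iCC (Imp (And p q) q)
| ipc5 : iCC (Imp p (Imp q (And p q)))
| ipc6 : iCC (Imp p (Or p q))
| ipc7 : iCC (Imp q (Or p q))
| ipc8 : iCC (Imp (Imp p r) (Imp (Imp q r) (Imp (Or p q) r)))
| ipc9 : iCC (Imp Bot p)
| ick_and : iCC (Iff (Cond p (And q r)) (And (Cond p q) (Cond p r)))
| ick_top : iCC (Iff (Cond p Top) Top)
| ax_id : iCC (Cond p p)
| ax_cut : iCC (Imp (And (Cond p q) (Cond (And p q) r)) (Cond p r))
| ax_cm : iCC (Imp (And (Cond p q) (Cond p r)) (Cond (And p q) r))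
| rule_subst : forall s f, iCC f -> iCC (subst s f)
| rule_mp : forall a b, iCC a -> iCC (Imp a b) -> iCC b
| rule_congl : forall a a' b, iCC (Iff a a') -> iCC (Iff (Cond a b) (Cond a' b))
| rule_congr : forall a b b', iCC (Iff b b') -> iCC (Iff (Cond a b) (Cond a b')).

Definition upset {X : Type} (le : X -> X -> Prop) (a : X -> Prop) : Prop :=
  forall x y, a x -> le x y -> a y.

Record cframe : Type := CFrame {
  W :> Type;
  le : W -> W -> Prop;
  le_refl : forall x, le x x;
  le_trans : forall x y z, le x y -> le y z -> le x z;
  inhabited_W : inhabited W;
  (* R a is R_a; only its values on upsets a are relevant *)
  R : (W -> Prop) -> W -> W -> Prop;
  R_coh : forall a, upset le a ->
    forall x y z, le x y -> R a y z -> exists w, R a x w /\ le w z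
}.

Definition valuation (F : cframe) := nat -> F -> Prop.
Definition upset_val (F : cframe) (V : valuation F) : Prop :=
  forall n, upset (le F) (V n).

Fixpoint sat (F : cframe) (V : valuation F) (x : F) (f : form) : Prop :=
  match f with
  | Var n => V n x
  | Bot => False
  | And a b => sat F V x a /\ sat F V x b
  | Or a b => sat F V x a \/ sat F V x b
  | Imp a b => forall y, le F x y -> sat F V y a -> sat F V y b
  | Cond a b => forall y, R F (fun z => sat F V z a) x y -> sat F V y b
  end.

Definition validates (F : cframe) (L : form -> Prop) : Prop :=
  forall f, L f -> forall V, upset_val F V -> forall x, sat F V x f.

Definition upR (F : cframe) (a : F -> Prop) (x : F) : F -> Prop :=
  fun z => exists y, R F a x y /\ le F y z.

(* Condition (i) is the frame condition of [p □→ p].  Given (i), an upset [b]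
   with [R_a[x] ⊆ b ⊆ a] is, up to equivalence, the extension of [p ∧ q] when
   [a] is that of [p] and [R_a[x] ⊆ q]; so CM-cut holds exactly when
   [R_a[x] ⊆ ↑R_b[x]] and CM exactly when [R_b[x] ⊆ ↑R_a[x]], which together
   say [↑R_a[x] = ↑R_b[x]].  For the converse, evaluate the axioms under the
   valuation [p, q, r := a, b, ↑R_b[x]] (resp. [↑R_a[x]]). *)
From Stdlib Require Import FunctionalExtensionality PropExtensionality.

Section ConditionalFrame.

Variable F : cframe.

Definition frame_valid (f : form) : Prop :=
  forall V, upset_val F V -> forall x, sat F V x f.

Definition id_cond : Prop :=
  forall (x : F) a, upset (le F) a -> forall y, R F a x y -> a y.

Definition cut_cond : Prop :=
  forall (x : F) a b, upset (le F) a -> upset (le F) b ->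
    (forall y, R F a x y -> b y) -> (forall y, b y -> a y) ->
    forall y, R F a x y -> upR F b x y.

Definition cm_cond : Prop :=
  forall (x : F) a b, upset (le F) a -> upset (le F) b ->
    (forall y, R F a x y -> b y) -> (forall y, b y -> a y) ->
    forall y, R F b x y -> upR F a x y.

Lemma pred_ext (a b : F -> Prop) : (forall z, a z <-> b z) -> a = b.
Proof.
  intros Hab; extensionality z; apply propositional_extensionality, Hab.
Qed.

Lemma upR_upset a (x : F) : upset (le F) (upR F a x).
Proof.
  intros u v [y [Hy Hyu]] Huv; exists y; split; [exact Hy | eapply le_trans; eauto].
Qed.

Lemma upR_of_R a (x y : F) : R F a x y -> upR F a x y.
Proof. intros Hy; exists y; split; [exact Hy | apply le_refl]. Qed.

Lemma upR_sub a b (x : F) :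
  (forall y, R F a x y -> upR F b x y) -> forall z, upR F a x z -> upR F b x z.
Proof.
  intros Hab z [y [Hy Hyz]].
  destruct (Hab y Hy) as [w [Hw Hwy]].
  exists w; split; [exact Hw | eapply le_trans; eauto].
Qed.

Section Valuation.

Variable V : valuation F.
Hypothesis HV : upset_val F V.

Lemma sat_upset f : upset (le F) (fun x => sat F V x f).
Proof.
  induction f as [n | | f IHf g IHg | f IHf g IHg | f IHf g IHg | f IHf g IHg];
    simpl; intros x y Hx Hxy.
  - exact (HV n x y Hx Hxy).
  - exact Hx.
  - destruct Hx; split; eauto.
  - destruct Hx; [left | right]; eauto.
  - intros z Hyz; apply Hx; eapply le_trans; eauto.
  - intros z Hz.
    destruct (R_coh F _ IHf x y z Hxy Hz) as [w [Hw Hwz]].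
    exact (IHg w z (Hx w Hw) Hwz).
Qed.

Lemma sat_Imp_refl (x : F) f g : sat F V x (Imp f g) -> sat F V x f -> sat F V x g.
Proof. intros Hfg; apply Hfg, le_refl. Qed.

Lemma sat_Cond_upR (x : F) f g :
  sat F V x (Cond f g) ->
  forall z, upR F (fun y => sat F V y f) x z -> sat F V z g.
Proof. intros Hfg z [y [Hy Hyz]]; exact (sat_upset g y z (Hfg y Hy) Hyz). Qed.

End Valuation.

Lemma sat_subst (V : valuation F) s f (x : F) :
  sat F V x (subst s f) <-> sat F (fun n z => sat F V z (s n)) x f.
Proof.
  revert x.
  induction f as [n | | f IHf g IHg | f IHf g IHg | f IHf g IHg | f IHf g IHg];
    simpl; intros x.
  - tauto.
  - tauto.
  - rewrite IHf, IHg; tauto.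
  - rewrite IHf, IHg; tauto.
  - split; intros H y Hxy Hy; apply IHg, H, IHf; assumption.
  - rewrite (pred_ext _ _ IHf).
    split; intros H y Hy; apply IHg, H, Hy.
Qed.

Lemma frame_valid_subst s f : frame_valid f -> frame_valid (subst s f).
Proof.
  intros Hf V HV x; apply sat_subst, Hf.
  intros n; apply sat_upset, HV.
Qed.

Lemma frame_valid_Imp f g :
  (forall V, upset_val F V -> forall x, sat F V x f -> sat F V x g) ->
  frame_valid (Imp f g).
Proof. intros Hfg V HV x y _; apply Hfg, HV. Qed.

Lemma frame_valid_Iff f g :
  (forall V, upset_val F V -> forall x, sat F V x f <-> sat F V x g) ->
  frame_valid (Iff f g).
Proof.
  intros Hfg V HV x; split; intros y _; apply Hfg, HV.
Qed.

Lemma frame_valid_Iff_sat f g :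
  frame_valid (Iff f g) -> forall V, upset_val F V -> forall x, sat F V x f <-> sat F V x g.
Proof.
  intros Hfg V HV x; destruct (Hfg V HV x) as [Hf Hg].
  split; apply sat_Imp_refl; assumption.
Qed.

Lemma frame_valid_mp f g : frame_valid f -> frame_valid (Imp f g) -> frame_valid g.
Proof. intros Hf Hfg V HV x; exact (sat_Imp_refl V x f g (Hfg V HV x) (Hf V HV x)). Qed.

Lemma frame_valid_congl f f' g :
  frame_valid (Iff f f') -> frame_valid (Iff (Cond f g) (Cond f' g)).
Proof.
  intros Hf; apply frame_valid_Iff; intros V HV x; simpl.
  rewrite (pred_ext _ _ (frame_valid_Iff_sat f f' Hf V HV)); tauto.
Qed.

Lemma frame_valid_congr f g g' :
  frame_valid (Iff g g') -> frame_valid (Iff (Cond f g) (Cond f g')).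
Proof.
  intros Hg; apply frame_valid_Iff; intros V HV x; simpl.
  split; intros H y Hy; apply (frame_valid_Iff_sat g g' Hg V HV), H, Hy.
Qed.

Lemma frame_valid_id : id_cond -> frame_valid (Cond p p).
Proof. intros Hid V HV x; exact (Hid x (V 0) (HV 0)). Qed.

Lemma frame_valid_cut :
  id_cond -> cut_cond ->
  frame_valid (Imp (And (Cond p q) (Cond (And p q) r)) (Cond p r)).
Proof.
  intros Hid Hcut; apply frame_valid_Imp; intros V HV x [Hq Hr] y Hy.
  apply (sat_Cond_upR V HV x (And p q) r Hr).
  apply (Hcut x _ _ (sat_upset V HV p) (sat_upset V HV (And p q))); [| | exact Hy].
  - intros w Hw; exact (conj (Hid x _ (HV 0) w Hw) (Hq w Hw)).
  - intros w Hw; exact (proj1 Hw).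
Qed.

Lemma frame_valid_cm :
  id_cond -> cm_cond ->
  frame_valid (Imp (And (Cond p q) (Cond p r)) (Cond (And p q) r)).
Proof.
  intros Hid Hcm; apply frame_valid_Imp; intros V HV x [Hq Hr] y Hy.
  apply (sat_Cond_upR V HV x p r Hr).
  apply (Hcm x _ _ (sat_upset V HV p) (sat_upset V HV (And p q))); [| | exact Hy].
  - intros w Hw; exact (conj (Hid x _ (HV 0) w Hw) (Hq w Hw)).
  - intros w Hw; exact (proj1 Hw).
Qed.

Lemma iCC_frame_valid :
  id_cond -> cut_cond -> cm_cond -> forall f, iCC f -> frame_valid f.
Proof.
  intros Hid Hcut Hcm f Hf.
  induction Hf as [| | | | | | | | | | | | | | s f _ IHf | f g _ IHf _ IHfg
                  | f f' g _ IHf | f g g' _ IHg].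
  1-9: apply frame_valid_Imp; intros V HV x; simpl.
  - intros Hp y Hxy _; exact (sat_upset V HV p x y Hp Hxy).
  - intros Hpqr y Hxy Hpq z Hyz Hp.
    exact (Hpqr z (le_trans F x y z Hxy Hyz) Hp z (le_refl F z) (Hpq z Hyz Hp)).
  - tauto.
  - tauto.
  - intros Hp y Hxy Hq; exact (conj (sat_upset V HV p x y Hp Hxy) Hq).
  - tauto.
  - tauto.
  - intros Hpr y Hxy Hqr z Hyz [Hp | Hq].
    + exact (Hpr z (le_trans F x y z Hxy Hyz) Hp).
    + exact (Hqr z Hyz Hq).
  - intros [].
  - apply frame_valid_Iff; intros V HV x; simpl; firstorder.
  - apply frame_valid_Iff; intros V HV x; simpl; firstorder.
  - apply frame_valid_id, Hid.
  - apply frame_valid_cut; assumption.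
  - apply frame_valid_cm; assumption.
  - apply frame_valid_subst, IHf.
  - exact (frame_valid_mp f g IHf IHfg).
  - apply frame_valid_congl, IHf.
  - apply frame_valid_congr, IHg.
Qed.

Definition val3 (a b c : F -> Prop) : valuation F :=
  fun n => match n with 0 => a | 1 => b | _ => c end.

Lemma val3_upset a b c :
  upset (le F) a -> upset (le F) b -> upset (le F) c -> upset_val F (val3 a b c).
Proof. intros Ha Hb Hc [| [| n]]; assumption. Qed.

Lemma id_cond_of_valid : frame_valid (Cond p p) -> id_cond.
Proof. intros H x a Ha; exact (H (fun _ => a) (fun _ => Ha) x). Qed.

Lemma cut_cond_of_valid :
  frame_valid (Imp (And (Cond p q) (Cond (And p q) r)) (Cond p r)) -> cut_cond.
Proof.
  intros H x a b Ha Hb Hab Hba.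
  pose proof (sat_Imp_refl _ x _ _
    (H (val3 a b (upR F b x)) (val3_upset _ _ _ Ha Hb (upR_upset b x)) x)) as Hcut.
  simpl in Hcut.
  rewrite (pred_ext (fun z => a z /\ b z) b) in Hcut by firstorder.
  apply Hcut; split; [exact Hab | apply upR_of_R].
Qed.

Lemma cm_cond_of_valid :
  frame_valid (Imp (And (Cond p q) (Cond p r)) (Cond (And p q) r)) -> cm_cond.
Proof.
  intros H x a b Ha Hb Hab Hba.
  pose proof (sat_Imp_refl _ x _ _
    (H (val3 a b (upR F a x)) (val3_upset _ _ _ Ha Hb (upR_upset a x)) x)) as Hcm.
  simpl in Hcm.
  rewrite (pred_ext (fun z => a z /\ b z) b) in Hcm by firstorder.
  apply Hcm; split; [exact Hab | apply upR_of_R].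
Qed.

End ConditionalFrame.

Theorem lemma6p1 (F : cframe) :
  validates F iCC <->
  (forall (x : F) (a b : F -> Prop), upset (le F) a -> upset (le F) b ->
     (forall y, R F a x y -> a y) /\
     ((forall y, R F a x y -> b y) -> (forall y, b y -> a y) ->
        forall z, upR F a x z <-> upR F b x z)).
Proof.
  split.
  - intros Hv x a b Ha Hb.
    pose proof (cut_cond_of_valid F (Hv _ ax_cut)) as Hcut.
    pose proof (cm_cond_of_valid F (Hv _ ax_cm)) as Hcm.
    split; [exact (id_cond_of_valid F (Hv _ ax_id) x a Ha) |].
    intros Hab Hba z; split; apply upR_sub; [apply Hcut | apply Hcm]; assumption.
  - intros Hc f Hf; refine (iCC_frame_valid F _ _ _ f Hf).
    + intros x a Ha; exact (proj1 (Hc x a a Ha Ha)).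
    + intros x a b Ha Hb Hab Hba y Hy.
      apply (proj2 (Hc x a b Ha Hb) Hab Hba), upR_of_R, Hy.
    + intros x a b Ha Hb Hab Hba y Hy.
      apply (proj2 (Hc x a b Ha Hb) Hab Hba), upR_of_R, Hy.
Qed.
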